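(* Let $X\times G\to X$ be a Bourbaki-proper continuous right action of a locally compact Hausdorff group on a Hausdorff space, with quotient map $\pi\colon X\to X/G$, and let $F\subseteq X$ be a closed subset such that the action is $F$-proper. If $F$ is paracompact, then so is $\pi(F)$.
   Context: For $A,B\subseteq X$ set $\langle A:B\rangle:=\{g\in G: Bg\cap A\neq\emptyset\}$ and write $A\perp B$ if it is relatively compact in $G$. The action is Bourbaki-proper if for all $x,x'\in X$ there are neighborhoods $V_x\ni x$, $V_{x'}\ni x'$ with $V_{x'}\perp V_x$. For closed $F$, it is $F$-proper if for every $x\in X$ there are neighborhoods $V_x\ni x$ and $V_F\supseteq F$ with $V_F\perp V_x$. *)

From HB Require Import structures.
From mathcomp Require Import all_boot all_order.
From mathcomp Require Import all_classical.
From mathcomp Require Import topology.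
Set Implicit Arguments. Unset Strict Implicit. Unset Printing Implicit Defensive.
Local Open Scope classical_set_scope.

Definition transporter (X G : Type) (act : X -> G -> X) (A B : set X) : set G :=
  [set g | exists2 b, B b & A (act b g)].

Definition perp (X : Type) (G : topologicalType) (act : X -> G -> X)
    (A B : set X) : Prop :=
  compact (closure (transporter act A B)).

Definition bourbaki_proper (X G : topologicalType) (act : X -> G -> X) : Prop :=
  forall x x' : X, exists Vx, exists Vx',
    [/\ nbhs x Vx, nbhs x' Vx' & perp act Vx' Vx].

Definition set_nbhs (T : topologicalType) (F N : set T) : Prop :=
  exists2 O, open O & F `<=` O /\ O `<=` N.

Definition F_proper (X G : topologicalType) (act : X -> G -> X) (F : set X) : Prop :=
  forall x : X, exists Vx, exists VF,
    [/\ nbhs x Vx, set_nbhs F VF & perp act VF Vx].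

(** Relatively open
    subsets of A are traces on A of open subsets of T. *)
Definition paracompact_set (T : topologicalType) (A : set T) : Prop :=
  (forall a b, A a -> A b -> a <> b ->
     exists U, exists V, [/\ open U, open V, U a, V b & U `&` V `&` A = set0])
  /\
  (forall C : set (set T), (forall U, C U -> open U) ->
     A `<=` \bigcup_(U in C) U ->
     exists D : set (set T),
       [/\ (forall V, D V -> open V),
           (forall V, D V -> exists2 U, C U & V `&` A `<=` U `&` A),
           A `<=` \bigcup_(V in D) V &
           (forall a, A a -> exists2 N, nbhs a N &
              finite_set [set V | D V /\ (N `&` V `&` A !=set0)])]).

From HB Require Import structures.
From mathcomp Require Import all_boot all_order.
From mathcomp Require Import all_classical.
From mathcomp Require Import topology.
Local Open Scope classical_set_scope.

(* F-properness makes the restriction of [pi] to [F] a perfect map: it is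
   closed, by the tube lemma applied to the compact closure of <V_F : V_x>, and
   its fibres [F ∩ xG] are continuous images of closed subsets of that compact
   set.  Perfect images of paracompact spaces are paracompact.  Compact fibres
   can be separated, so [pi F] is Hausdorff.  Pulling an open cover of [pi F]
   back to [F], shrinking it by regularity of [F] and taking a locally finite
   refinement, the images of the closures form a locally finite closed
   refinement; by Michael's lemma such refinements yield locally finite open
   ones. *)

Lemma filter_forall_finite_set {I T : Type} {S : set I} {P : I -> set T}
    {G : set_system T} {FG : Filter G} :
  finite_set S -> (forall i, S i -> G (P i)) ->
  G [set x | forall i, S i -> P i x].
Proof.
elim/Pchoice: I S P => I S P /finite_fsetP [D ->] GP.
apply: filterS (filter_bigI FG (fun i iD => GP i iD)) => x Px i Si.
exact: Px i Si.
Qed.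

Lemma open_mem_nbhs {T : topologicalType} {U : set T} {x : T} :
  open U -> U x -> nbhs x U.
Proof. by move=> oU Ux; apply: open_nbhs_nbhs. Qed.

Definition separated_in {T : topologicalType} (A : set T) : Prop :=
  forall a b, A a -> A b -> a <> b ->
    exists U, exists V, [/\ open U, open V, U a, V b & U `&` V `&` A = set0].

Definition locally_finite_in {T : topologicalType} (A : set T)
    (D : set (set T)) : Prop :=
  forall a, A a -> exists2 N, nbhs a N &
    finite_set [set V | D V /\ N `&` V `&` A !=set0].

Definition has_lf_open_refinements {T : topologicalType} (A : set T) : Prop :=
  forall C : set (set T), (forall U, C U -> open U) ->
    A `<=` \bigcup_(U in C) U ->
  exists D : set (set T),
    [/\ (forall V, D V -> open V),
        (forall V, D V -> exists2 U, C U & V `&` A `<=` U `&` A),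
        A `<=` \bigcup_(V in D) V & locally_finite_in A D].

Definition has_lf_closed_refinements {T : topologicalType} (A : set T) : Prop :=
  forall C : set (set T), (forall U, C U -> open U) ->
    A `<=` \bigcup_(U in C) U ->
  exists S : set (set T),
    [/\ (forall E, S E -> closed E /\ E `<=` A),
        (forall E, S E -> exists2 U, C U & E `<=` U),
        A `<=` \bigcup_(E in S) E & locally_finite_in A S].

Lemma compact_separated_in {T : topologicalType} {A S K : set T} :
  compact K ->
  (forall k, K k -> exists U, exists O,
     [/\ open U, U k, open O, S `<=` O & U `&` O `&` A = set0]) ->
  exists U, exists O,
    [/\ open U, K `<=` U, open O, S `<=` O & U `&` O `&` A = set0].
Proof.
move=> /compact_near_coveringP cptK sepK.
pose nbhsS := filter_from [set O : set T | open O /\ S `<=` O]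
  (fun O => [set O' : set T | O' `<=` O]).
have nbhsS_filter : Filter nbhsS.
  apply: filter_from_filter; first by exists setT; split => //; exact: openT.
  move=> O1 O2 [oO1 SO1] [oO2 SO2]; exists (O1 `&` O2).
    by split; [exact: openI | move=> x Sx; split; [exact: SO1 | exact: SO2]].
  by move=> O' /= O'O; split => x /O'O [].
have [|O [oO SO] sepO] := cptK _ nbhsS
  (fun O x => exists U, [/\ open U, U x & U `&` O `&` A = set0]) nbhsS_filter.
- move=> k Kk; have [U [O [oU Uk oO SO UOA]]] := sepK k Kk.
  exists (U, [set O' | O' `<=` O]).
    by split; [exact: open_mem_nbhs | exists O].
  move=> [x O'] [/= Ux O'O]; exists U; split => //.
  apply/seteqP; split => // z [[Uz O'z] Az]; rewrite -UOA.
  by split => //; split => //; exact: O'O.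
exists [set x | exists U, [/\ open U, U x & U `&` O `&` A = set0]], O.
split => //.
- rewrite openE => x [U [oU Ux UOA]].
  by apply: filterS (oU x Ux) => y Uy; exists U.
- by move=> k Kk; apply: (sepO O).
- apply/seteqP; split => // z [[[U [_ Uz UOA]] Oz] Az]; rewrite -UOA.
  by split => //; split.
Qed.

Lemma locally_finite_near_compact {T : topologicalType} {A K : set T}
    {D : set (set T)} :
  compact K -> K `<=` A -> locally_finite_in A D ->
  exists O, [/\ open O, K `<=` O &
    finite_set [set V | D V /\ O `&` V `&` A !=set0]].
Proof.
move=> /compact_near_coveringP cptK KA lfD.
pose cofinite := filter_from [set S : set (set T) | finite_set S]
  (fun S => [set S' : set (set T) | S `<=` S']).
have cofinite_filter : Filter cofinite.
  apply: filter_from_filter; first by exists set0; exact: finite_set0.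
  move=> S1 S2 fS1 fS2; exists (S1 `|` S2); first by rewrite /= finite_setU.
  by move=> S' /= S12; split => V ?; apply: S12; [left | right].
have [|S finS SK] := cptK _ cofinite (fun S x => exists2 N, nbhs x N &
  [set V | D V /\ N `&` V `&` A !=set0] `<=` S) cofinite_filter.
- move=> k Kk; have [N Nk finN] := lfD k (KA k Kk).
  pose DN := [set V | D V /\ N `&` V `&` A !=set0].
  exists ([set y | nbhs y N], [set S | DN `<=` S]).
    by split; [exact: nbhs_interior | exists DN].
  by move=> [y S] [/= Ny NS]; exists N.
exists [set x | exists2 N, nbhs x N &
  [set V | D V /\ N `&` V `&` A !=set0] `<=` S]; split.
- rewrite openE => x [N Nx NS].
  by apply: filterS (nbhs_interior Nx) => y Ny; exists N.
- by move=> k Kk; apply: (SK S).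
- apply: sub_finite_set finS => V [DV [z [[[N Nz NS] Vz] Az]]].
  apply: NS; split => //; exists z.
  by split => //; split => //; exact: nbhs_singleton.
Qed.

(* Cover [A] by [U] and by open sets that are separated from [x] on [A]: near
   [x], the finitely many members of a locally finite refinement that are not
   inside [U] can then be avoided. *)
Lemma paracompact_set_regular {T : topologicalType} {A U : set T} {x : T} :
  paracompact_set A -> A x -> open U -> U x ->
  exists V, [/\ open V, V x & closure (V `&` A) `&` A `<=` U].
Proof.
move=> [A_sep A_cov] Ax oU Ux.
have [||D [oD refD covD lfD]] := A_cov [set B | open B /\ (B = U \/
    exists2 W, open W & W x /\ W `&` B `&` A = set0)].
- by move=> B [].
- move=> z Az; have [Uz|nUz] := pselect (U z).
    by exists U => //; split => //; left.
  have xz : x <> z by move=> xz; apply: nUz; rewrite -xz.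
  have [W [B [oW oB Wx Bz WB]]] := A_sep x z Ax Az xz.
  by exists B => //; split => //; right; exists W.
have [N Nx finN] := lfD x Ax.
pose harmless V := [set y | V `&` A `<=` U \/
  exists2 W, open W & W y /\ W `&` V `&` A = set0].
have near_harmless V : D V /\ N `&` V `&` A !=set0 -> nbhs x (harmless V).
  move=> [DV _]; have [B [_ [->|[W oW [Wx WB]]]] VB] := refD V DV.
    by apply: nearW => y; left => z /VB [].
  apply: filterS (open_mem_nbhs oW Wx) => y Wy; right; exists W => //.
  split => //; apply/seteqP; split => // z [[Wz Vz] Az].
  by have [Bz _] := VB z (conj Vz Az); rewrite -WB.
exists (interior (N `&` [set y | forall V,
  D V /\ N `&` V `&` A !=set0 -> harmless V y])); split.
- exact: open_interior.
- apply: (filterI Nx); exact: filter_forall_finite_set finN near_harmless.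
move=> z [cz Az]; have [V DV Vz] := covD z Az.
have [y [[My Ay] Vy]] := cz V (open_mem_nbhs (oD V DV) Vz).
have [Ny harmless_y] := interior_subset My.
have DNV : D V /\ N `&` V `&` A !=set0 by split => //; exists y.
have [VU|[W _ [Wy WV]]] := harmless_y V DNV; first exact: VU.
by have : (W `&` V `&` A) y by []; rewrite WV.
Qed.

Lemma sub_locally_finite_in {T : topologicalType} (A : set T)
    (D D' : set (set T)) :
  D' `<=` D -> locally_finite_in A D -> locally_finite_in A D'.
Proof.
move=> D'D lfD a Aa; have [N Na finN] := lfD a Aa; exists N => //.
by apply: sub_finite_set finN => V [/D'D].
Qed.

Lemma locally_finite_bigcup_closed {T : topologicalType} (A : set T)
    (S : set (set T)) :
  closed A -> (forall E, S E -> closed E /\ E `<=` A) ->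
  locally_finite_in A S -> closed (\bigcup_(E in S) E).
Proof.
move=> cA cS lfS; rewrite -[X in closed X]setCK closedC openE => q nSq.
have [Aq|nAq] := pselect (A q); last first.
  have oAc : open (~` A) by rewrite openC.
  apply: filterS (open_mem_nbhs oAc nAq) => y nAy [E SE Ey].
  exact/nAy/(cS E SE).2.
have [N Nq finN] := lfS q Aq.
have avoid E : S E /\ N `&` E `&` A !=set0 -> nbhs q (~` E).
  move=> [SE _]; apply: open_mem_nbhs => [|Eq]; last by apply: nSq; exists E.
  by rewrite openC; exact: (cS E SE).1.
apply: filterS (filterI Nq (filter_forall_finite_set finN avoid)).
move=> y [Ny avoid_y] [E SE Ey]; apply: (avoid_y E _ Ey); split => //.
by exists y; split; [split | exact: (cS E SE).2].
Qed.

Lemma locally_finite_open_cover {T : topologicalType} (A : set T)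
    (S : set (set T)) :
  locally_finite_in A S ->
  A `<=` \bigcup_(W in [set W | open W /\
    finite_set [set E | S E /\ W `&` E `&` A !=set0]]) W.
Proof.
move=> lfS a Aa; have [N Na finN] := lfS a Aa.
exists (interior N); last exact: Na.
split; first exact: open_interior.
apply: sub_finite_set finN => E [SE [z [[Nz Ez] Az]]]; split => //.
by exists z; split => //; split => //; exact: interior_subset.
Qed.

(* Michael's lemma.  The second closed refinement [S2] refines the cover by
   open sets meeting only finitely many members of [S1]. *)
Lemma lf_open_refinements_of_closed {T : topologicalType} (A : set T) :
  closed A -> has_lf_closed_refinements A -> has_lf_open_refinements A.
Proof.
move=> cA refA C oC covC.
have [S1 [cS1 rS1 covS1 lfS1]] := refA C oC covC.
have [||S2 [cS2 rS2 covS2 lfS2]] := refA [set W | open W /\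
  finite_set [set E | S1 E /\ W `&` E `&` A !=set0]].
- by move=> W [].
- exact: locally_finite_open_cover.
have finS1 B : S2 B -> finite_set [set E | S1 E /\ B `&` E !=set0].
  move=> S2B; have [W [_ finW] BW] := rS2 B S2B.
  apply: sub_finite_set finW => E [S1E [z [Bz Ez]]]; split => //.
  by exists z; split; [split; [exact: BW |] | exact: (cS2 B S2B).2].
have [wf wfP] : {wf : set T -> set T &
    forall E, S1 E -> C (wf E) /\ E `<=` wf E}.
  apply: (@choice _ _ (fun E W => S1 E -> C W /\ E `<=` W)) => E.
  have [S1E|] := pselect (S1 E); last by exists set0.
  by have [W CW EW] := rS1 E S1E; exists W.
(* [away E] contains [E], and a member of [S2] meeting [away E] meets [E]. *)
pose away E := ~` \bigcup_(B in [set B | S2 B /\ B `&` E = set0]) B.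
have open_away E : open (away E).
  rewrite openC; apply: locally_finite_bigcup_closed cA _ _.
    by move=> B [S2B _]; exact: cS2.
  by apply: sub_locally_finite_in lfS2 => B [].
exists [set V | exists2 E, S1 E & V = away E `&` wf E]; split.
- move=> _ [E S1E ->]; apply: openI; first exact: open_away.
  exact/oC/(wfP E S1E).1.
- move=> _ [E S1E ->]; exists (wf E); first exact: (wfP E S1E).1.
  by move=> z [[_ ?] ?].
- move=> a Aa; have [E S1E Ea] := covS1 a Aa.
  exists (away E `&` wf E); first by exists E.
  split; last exact: (wfP E S1E).2.
  by move=> [B [_ BE] Ba]; have : (B `&` E) a by []; rewrite BE.
- move=> a Aa; have [N Na finN] := lfS2 a Aa; exists N => //.
  apply: sub_finite_set (finite_image (fun E => away E `&` wf E)
    (bigcup_finite finN (fun B NB => finS1 B NB.1))).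
  move=> _ [[E S1E ->] [z [[Nz [away_z _]] Az]]].
  have [B S2B Bz] := covS2 z Az.
  exists E => //; exists B; first by split => //; exists z; split => //; split.
  split => //; apply: contrapT => nBE; apply: away_z; exists B => //.
  by split => //; apply/seteqP; split => // w Bw; apply: nBE; exists w.
Qed.

Section PerfectImage.
Context {X Y : topologicalType} {f : X -> Y} {F : set X}.

Let fiber (x : X) : set X := [set z | F z /\ f z = f x].

(* Engelking's small image f^#(O) = Y \ f(F \ O). *)
Let small_image (O : set X) : set Y :=
  [set y | forall z, F z -> f z = y -> O z].

Hypothesis f_cont : forall W, open W -> open (f @^-1` W).
Hypothesis F_closed : closed F.
Hypothesis f_closed : forall C, closed C -> C `<=` F -> closed (f @` C).
Hypothesis fiber_compact : forall x, F x -> compact (fiber x).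
Hypothesis F_para : paracompact_set F.

Let open_small_image O : open O -> open (small_image O).
Proof.
move=> oO; have -> : small_image O = ~` (f @` (F `\` O)).
  apply/seteqP; split => [y Oy [z [Fz nOz] fz]|y nOy z Fz fz].
    by apply/nOz/Oy.
  by apply: contrapT => nOz; apply: nOy; exists z.
rewrite openC; apply: f_closed; last by move=> z [].
by apply: closedI => //; rewrite closedC.
Qed.

Lemma perfect_image_separated : separated_in (f @` F).
Proof.
have [F_sep _] := F_para.
move=> _ _ [x Fx <-] [y Fy <-] fxy.
have sep_point k : F k -> f k = f y -> exists U, exists O,
    [/\ open U, fiber x `<=` U, open O, [set k] `<=` O & U `&` O `&` F = set0].
  move=> Fk fk; apply: compact_separated_in (fiber_compact x Fx) _.
  move=> j [Fj fj].
  have jk : j <> k by move=> jk; apply: fxy; rewrite -fj -fk jk.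
  have [U [V [oU oV Uj Vk UV]]] := F_sep j k Fj Fk jk.
  by exists U, V; split => // z ->.
have [V [U [oV yV oU xU VU]]] : exists V, exists U,
    [/\ open V, fiber y `<=` V, open U, fiber x `<=` U & V `&` U `&` F = set0].
  apply: compact_separated_in (fiber_compact y Fy) _ => k [Fk fk].
  have [U [O [oU xU oO kO UO]]] := sep_point k Fk fk.
  exists O, U; split => //; first exact: kO.
  by rewrite (setIC O U).
exists (small_image U), (small_image V); split.
- exact: open_small_image.
- exact: open_small_image.
- by move=> z Fz fz; apply: xU.
- by move=> z Fz fz; apply: yV.
apply/seteqP; split => // q [[Uq Vq] [z Fz fz]].
have : (V `&` U `&` F) z by split; [split; [exact: Vq | exact: Uq] |].
by rewrite VU.
Qed.

Lemma perfect_image_closed_refinements : has_lf_closed_refinements (f @` F).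
Proof.
have [_ F_cov] := F_para.
have clF V : closure (V `&` F) `<=` F.
  by apply: subset_trans F_closed; apply: closureS; exact: subIsetr.
move=> C oC covC.
have [||D [oD refD covD lfD]] := F_cov [set V | open V /\
  exists2 W, C W & closure (V `&` F) `<=` f @^-1` W].
- by move=> V [].
- move=> x Fx; have [W CW Wx] := covC (f x) (ex_intro2 _ _ x Fx erefl).
  have [V [oV Vx VW]] :=
    paracompact_set_regular F_para Fx (f_cont W (oC W CW)) Wx.
  exists V => //; split => //; exists W => // z cz.
  by apply: VW; split => //; exact: clF cz.
exists [set E | exists2 V, D V & E = f @` closure (V `&` F)]; split.
- move=> _ [V DV ->]; split; last by move=> _ [z /clF Fz <-]; exists z.
  by apply: f_closed (clF V); exact: closed_closure.
- move=> _ [V DV ->]; have [U [oU [W CW UW]] VU] := refD V DV.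
  by exists W => // _ [z cz <-]; apply: UW; exact: closureS VU _ cz.
- move=> _ [x Fx <-]; have [V DV Vx] := covD x Fx.
  exists (f @` closure (V `&` F)); first by exists V.
  by exists x => //; apply: subset_closure.
move=> _ [x Fx <-].
have fiberF : fiber x `<=` F by move=> z [].
have [O [oO xO finO]] :=
  locally_finite_near_compact (fiber_compact x Fx) fiberF lfD.
exists (small_image O).
  apply: open_mem_nbhs; first exact: open_small_image.
  by move=> z Fz fz; apply: xO.
apply: sub_finite_set (finite_image (fun V => f @` closure (V `&` F)) finO).
move=> _ [[V DV ->] [q [[Oq [z cz zq]] _]]].
exists V => //; split => //.
have [w [[Vw Fw] Ow]] := cz O (open_mem_nbhs oO (Oq z (clF V z cz) zq)).
by exists w.
Qed.

Theorem paracompact_perfect_image : paracompact_set (f @` F).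
Proof.
split; first exact: perfect_image_separated.
apply: lf_open_refinements_of_closed perfect_image_closed_refinements.
exact: f_closed.
Qed.

End PerfectImage.

Section ProperActionQuotient.
Context {G X Q : topologicalType} {act : X -> G -> X} {quot : X -> Q}.
Context {F : set X}.
Hypothesis act_cont : continuous (fun p : X * G => act p.1 p.2).
Hypothesis quot_fibers : forall x y, quot x = quot y <-> exists g, act x g = y.
Hypothesis F_closed : closed F.
Hypothesis Fprop : F_proper act F.

Let act_continuous x : continuous (act x).
Proof.
move=> g W Wxg; have [[A B] /= [Ax Bg] AB] := act_cont (x, g) _ Wxg.
by apply: filterS Bg => h Bh; exact: (AB (x, h) (conj (nbhs_singleton Ax) Bh)).
Qed.

(* Near [x], the tube lemma keeps [act y g] off [C] for all [g] in the compact
   closure of <V_F : V_x>, and every [g] moving a point of [V_x] into [C]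
   lies there. *)
Lemma F_proper_image_closed :
  (forall W, open (quot @^-1` W) -> open W) ->
  forall C, closed C -> C `<=` F -> closed (quot @` C).
Proof.
move=> quot_open C cC CF; rewrite -[quot @` C]setCK closedC; apply: quot_open.
rewrite openE => x /= nCx.
have [Vx [VF [Vx_x [O _ [FO OVF]] cptK]]] := Fprop x.
set K := closure (transporter act VF Vx) in cptK *.
have tube : \forall y \near x, K `<=` (fun g => ~ C (act y g)).
  have /compact_near_coveringP coverK := cptK.
  apply: (coverK X (nbhs x) (fun y g => ~ C (act y g))) => g Kg.
  have nCxg : ~ C (act x g).
    move=> Cxg; apply: nCx; exists (act x g) => //.
    by symmetry; apply/quot_fibers; exists g.
  have oCc : open (~` C) by rewrite openC.
  have [[A B] /= [Ax Bg] AB] := act_cont (x, g) _ (open_mem_nbhs oCc nCxg).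
  by exists (B, A) => // [[h y]] [/= Bh Ay]; exact: (AB (y, h) (conj Ay Bh)).
apply: filterS (filterI tube Vx_x) => y [Ky Vy] [c Cc pc].
have [h yh] := (quot_fibers y c).1 (esym pc).
apply: (Ky h); last by rewrite yh.
by apply: subset_closure; exists y => //; rewrite yh; exact/OVF/FO/CF.
Qed.

Lemma F_proper_fiber_compact x : compact [set z | F z /\ quot z = quot x].
Proof.
have [Vx [VF [Vx_x [O _ [FO OVF]] cptK]]] := Fprop x.
have -> : [set z | F z /\ quot z = quot x] = act x @` [set g | F (act x g)].
  apply/seteqP; split => [z [Fz pz]|_ [g Fg <-]].
    by have [g xg] := (quot_fibers x z).1 (esym pz); exists g; rewrite /= xg.
  by split => //; symmetry; apply/quot_fibers; exists g.
apply: continuous_compact; first exact/continuous_subspaceT/act_continuous.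
apply: subclosed_compact cptK _.
  by apply: preimage_closed F_closed => g _; exact: act_continuous.
move=> g Fg; apply: subset_closure; exists x; first exact: nbhs_singleton.
exact/OVF/FO.
Qed.

End ProperActionQuotient.

Theorem lemma2p13
  (* a locally compact Hausdorff topological group G *)
  (G : topologicalType) (mul : G -> G -> G) (inv : G -> G) (e : G)
  (mulA : forall a b c, mul a (mul b c) = mul (mul a b) c)
  (mul1g : forall a, mul e a = a) (mulg1 : forall a, mul a e = a)
  (mulVg : forall a, mul (inv a) a = e) (mulgV : forall a, mul a (inv a) = e)
  (mul_cont : continuous (fun p : G * G => mul p.1 p.2))
  (inv_cont : continuous inv)
  (G_haus : hausdorff_space G) (G_lc : locally_compact [set: G])
  (* a Hausdorff space X with a continuous right action *)
  (X : topologicalType) (X_haus : hausdorff_space X)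
  (act : X -> G -> X)
  (act_cont : continuous (fun p : X * G => act p.1 p.2))
  (act1 : forall x, act x e = x)
  (actM : forall x g h, act (act x g) h = act x (mul g h))
  (* Bourbaki-properness *)
  (bprop : bourbaki_proper act)
  (* the orbit space X/G with its quotient topology and quotient map pi *)
  (Q : topologicalType) (pi : X -> Q)
  (pi_surj : forall q : Q, exists x, pi x = q)
  (pi_fibers : forall x y, pi x = pi y <-> exists g, act x g = y)
  (Q_open : forall W : set Q, open W <-> open (pi @^-1` W))
  (* the closed set F *)
  (F : set X) (F_closed : closed F) (Fprop : F_proper act F)
  (F_para : paracompact_set F) :
  paracompact_set (pi @` F).
Proof.
apply: (paracompact_perfect_image _ F_closed _ _ F_para).
- by move=> W; rewrite -Q_open.
- exact: F_proper_image_closed act_cont pi_fibers Fprop (fun W => (Q_open W).2).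
- move=> x _.
  exact: F_proper_fiber_compact act_cont pi_fibers F_closed Fprop x.
Qed.
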